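(* Let $H$ be a Hermitian operator on a $d$-dimensional Hilbert space with spectral decomposition $H=\sum_{i=1}^M\lambda_i\Pi_i$, where $M\ge 2$, $\lambda_M>\cdots>\lambda_1$ are the distinct eigenvalues and $\Pi_i$ the spectral projections ($\Pi_i\Pi_j=\delta_{ij}\Pi_i$, $\sum_i\Pi_i=I$). Let $\Delta=\lambda_2-\lambda_1$ and $d_G=\operatorname{Tr}[\Pi_1]$, and write $\gamma=\frac{\Pi_1}{\operatorname{Tr}[\Pi_1]}$, $\tau_\beta=\frac{e^{-\beta H}}{\operatorname{Tr}[e^{-\beta H}]}$. Then for every $\beta\ge 0$, $$D(\gamma\|\tau_\beta)=\ln\!\left(1+\frac{\sum_{i=2}^Me^{-\beta(\lambda_i-\lambda_1)}\operatorname{Tr}[\Pi_i]}{d_G}\right)\le\ln\!\left(1+e^{-\beta\Delta}\left(\frac{d-d_G}{d_G}\right)\right),$$ and moreover, for all $\alpha\in(0,1)\cup(1,\infty)$, $$D(\gamma\|\tau_\beta)=D_\alpha(\gamma\|\tau_\beta)=\widetilde{D}_\alpha(\gamma\|\tau_\beta)=\widehat{D}_\alpha(\gamma\|\tau_\beta).$$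
   Context: For states $\rho,\sigma$: the quantum relative entropy is $D(\rho\|\sigma)=\operatorname{Tr}[\rho(\ln\rho-\ln\sigma)]$; the Petz–Rényi relative entropy is $D_\alpha(\rho\|\sigma)=\frac{1}{\alpha-1}\ln\operatorname{Tr}[\rho^\alpha\sigma^{1-\alpha}]$; the sandwiched Rényi relative entropy is $\widetilde{D}_\alpha(\rho\|\sigma)=\frac{1}{\alpha-1}\ln\operatorname{Tr}\!\left[\left(\sigma^{\frac{1-\alpha}{2\alpha}}\rho\,\sigma^{\frac{1-\alpha}{2\alpha}}\right)^\alpha\right]$; the geometric Rényi relative entropy is $\widehat{D}_\alpha(\rho\|\sigma)=\frac{1}{\alpha-1}\ln\operatorname{Tr}\!\left[\sigma\left(\sigma^{-1/2}\rho\,\sigma^{-1/2}\right)^\alpha\right]$ (here $\sigma$ is full rank). *)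

From HB Require Import structures.
From mathcomp Require Import all_boot all_order all_algebra.
From mathcomp Require Import sesquilinear spectral.
From mathcomp Require Import complex.
From mathcomp Require Import reals.
From mathcomp Require Import sequences.
From mathcomp.analysis Require Import exp.

Set Implicit Arguments.
Unset Strict Implicit.
Unset Printing Implicit Defensive.

Import Order.TTheory GRing.Theory Num.Theory.
Local Open Scope ring_scope.
Local Open Scope complex_scope.

Section QuantumDivergences.
Variable R : realType.
Local Notation C := R[i].

Definition RtoC (x : R) : C := x%:C.

(* Functional calculus f(A) for a Hermitian (more generally normal) matrix A,
   through the library's spectral decomposition
   A = (spectralmx A)^-1 *m diag_mx (spectral_diag A) *m spectralmx A
   (spectralmx A unitary); f is applied to the (real) eigenvalues. *)
Definition mxfun n (f : R -> R) (A : 'M[C]_n) : 'M[C]_n :=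
  invmx (spectralmx A) *m
  diag_mx (map_mx (fun z : C => RtoC (f (complex.Re z))) (spectral_diag A)) *m
  spectralmx A.

(* Matrix exponential, logarithm (with the support convention ln 0 = 0 of
   mathcomp-analysis) and real powers (0 ^ a = 0 for a <> 0). *)
Definition mexp n (A : 'M[C]_n) := mxfun expR A.
Definition mlog n (A : 'M[C]_n) := mxfun (@ln R) A.
Definition mpow n (a : R) (A : 'M[C]_n) := mxfun (fun x => powR x a) A.

(* Trace, as a real number (the traces below are real for the relevant
   positive semidefinite / Hermitian arguments). *)
Definition rtr n (A : 'M[C]_n) : R := complex.Re (\tr A).

Definition qrelent n (rho sigma : 'M[C]_n) : R :=
  rtr (rho *m (mlog rho - mlog sigma)).

Definition petz_renyi n (a : R) (rho sigma : 'M[C]_n) : R :=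
  (a - 1)^-1 * ln (rtr (mpow a rho *m mpow (1 - a) sigma)).

Definition sandwiched_renyi n (a : R) (rho sigma : 'M[C]_n) : R :=
  (a - 1)^-1 *
  ln (rtr (mpow a (mpow ((1 - a) / (2 * a)) sigma *m rho *m
                   mpow ((1 - a) / (2 * a)) sigma))).

(* Geometric Renyi relative entropy (sigma full rank). *)
Definition geometric_renyi n (a : R) (rho sigma : 'M[C]_n) : R :=
  (a - 1)^-1 *
  ln (rtr (sigma *m mpow a (mpow (- (1 / 2)) sigma *m rho *m
                            mpow (- (1 / 2)) sigma))).

End QuantumDivergences.

From mathcomp Require Import all_boot all_order all_algebra.
From mathcomp Require Import sesquilinear spectral.
From mathcomp Require Import complex.
From mathcomp Require Import reals.
From mathcomp Require Import sequences.
From mathcomp.analysis Require Import exp.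
From mathcomp Require Import ring.
Import Order.TTheory GRing.Theory Num.Theory.
Local Open Scope ring_scope.

(* Every operator involved (gamma, tau_beta and the matrix functions of them)
   is a real combination sum_i a_i Pi_i of the spectral projections, on which
   products, matrix functions and traces act coefficientwise.  Since gamma
   lives on Pi_1, where tau_beta is the scalar p = exp (- beta lambda_1) / Z,
   all four divergences collapse to - ln (d_G p) = ln (Z exp (beta lambda_1) / d_G),
   which is the stated sum; the bound then follows from lambda_i - lambda_1 >= Delta
   for i >= 2 and sum_(i >= 2) Tr Pi_i = d - d_G. *)

Set Implicit Arguments.
Unset Strict Implicit.
Unset Printing Implicit Defensive.

Section RealTrace.
Variable R : realType.
Local Notation C := R[i].

Lemma rtr_sum n I (r : seq I) (P : pred I) (F : I -> 'M[C]_n) :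
  rtr (\sum_(i <- r | P i) F i) = \sum_(i <- r | P i) rtr (F i).
Proof. by rewrite /rtr [\tr _]raddf_sum raddf_sum. Qed.

Lemma rtrZ n (x : R) (A : 'M[C]_n) : rtr (RtoC x *: A) = x * rtr A.
Proof. by rewrite /rtr mxtraceZ; case: (\tr A) => a b /=; rewrite mul0r subr0. Qed.

Lemma rtr1 n : rtr (1%:M : 'M[C]_n) = n%:R.
Proof. by rewrite /rtr mxtrace1 -(rmorph_nat (real_complex R)). Qed.

Lemma hermitian_conj n (A : 'M[C]_n) k l : A \is hermsymmx -> A l k = (A k l)^*.
Proof.
by move=> /is_hermitianmxP; rewrite expr0 scale1r => /matrixP/(_ l k); rewrite !mxE.
Qed.

Lemma mxtrace_hermitian_idem n (P : 'M[C]_n) : P \is hermsymmx -> P *m P = P ->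
  \tr P = \sum_k \sum_l P k l * (P k l)^*.
Proof.
move=> Pherm Pidem; rewrite -{1}Pidem /mxtrace; apply: eq_bigr => k _; rewrite mxE.
by apply: eq_bigr => l _; rewrite [P l k](hermitian_conj _ _ Pherm).
Qed.

Lemma mxtrace_proj_ge0 n (P : 'M[C]_n) :
  P \is hermsymmx -> P *m P = P -> 0 <= \tr P.
Proof.
move=> Pherm Pidem; rewrite mxtrace_hermitian_idem //.
by do 2![apply: sumr_ge0 => ? _]; exact: mulcJ_ge0.
Qed.

Lemma rtr_proj_ge0 n (P : 'M[C]_n) : P \is hermsymmx -> P *m P = P -> 0 <= rtr P.
Proof.
by move=> Pherm Pidem; have := mxtrace_proj_ge0 Pherm Pidem; rewrite lecE => /andP[].
Qed.

Lemma rtr_proj_gt0 n (P : 'M[C]_n) :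
  P \is hermsymmx -> P *m P = P -> P != 0 -> 0 < rtr P.
Proof.
move=> Pherm Pidem Pnz; rewrite lt_def rtr_proj_ge0 // andbT.
apply: contra Pnz => /eqP trP0; apply/eqP/matrixP => k l; rewrite mxE.
have trP : \tr P = 0.
  move: (ger0_Im (mxtrace_proj_ge0 Pherm Pidem)) trP0.
  by rewrite /rtr; case: (\tr P) => a b /= -> ->.
move: trP; rewrite mxtrace_hermitian_idem // => /eqP.
rewrite psumr_eq0 => [/allP/(_ k (mem_index_enum k))|k' _]; last first.
  by apply: sumr_ge0 => ? _; exact: mulcJ_ge0.
rewrite psumr_eq0 => [/allP/(_ l (mem_index_enum l))|l' _]; last exact: mulcJ_ge0.
by rewrite mulf_eq0 conjC_eq0 orbb => /eqP.
Qed.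

End RealTrace.

Section FunctionalCalculus.
Variable R : realType.
Local Notation C := R[i].

Lemma mxfun_eigenprojections n M (P : 'I_M -> 'M[C]_n) (c : 'I_M -> C)
    (f : R -> R) (A : 'M[C]_n) :
  A \is normalmx -> (forall i, A *m P i = c i *: P i) -> \sum_i P i = 1%:M ->
  mxfun f A = \sum_i RtoC (f (complex.Re (c i))) *: P i.
Proof.
move=> An AP Psum; rewrite /mxfun.
set U := spectralmx A; set D := spectral_diag A.
set g := fun z : C => RtoC (f (complex.Re z)).
have Uu : U \in unitmx := spectral_unit A.
pose Q i := U *m P i *m invmx U.
have DQ i : diag_mx D *m Q i = c i *: Q i.
  have -> : diag_mx D = U *m A *m invmx U.
    by rewrite (orthomx_spectralP An) !mulmxA mulmxV // mul1mx mulmxK.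
  by rewrite /Q !mulmxA mulmxKV // -(mulmxA U A) AP -scalemxAr -scalemxAl.
have Qsum : \sum_i Q i = 1%:M.
  by rewrite /Q -mulmx_suml -mulmx_sumr Psum mulmx1 mulmxV.
suff -> : diag_mx (map_mx g D) = \sum_i g (c i) *: Q i.
  rewrite mulmx_sumr mulmx_suml; apply: eq_bigr => i _.
  by rewrite /Q -scalemxAr -scalemxAl !mulmxA mulVmx // mul1mx mulmxKV.
(* Row k of Q i vanishes unless D k = c i. *)
apply/matrixP => k l; rewrite summxE.
transitivity (\sum_i g (D 0 k) * Q i k l).
  by rewrite -mulr_sumr -summxE Qsum !mxE mulr_natr.
apply: eq_bigr => i _; rewrite [RHS]mxE.
have [->|Qnz] := eqVneq (Q i k l) 0; first by rewrite !mulr0.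
have /matrixP/(_ k l) := DQ i; rewrite mul_diag_mx mxE [in X in _ = X -> _]mxE.
by move/(mulIf Qnz) ->.
Qed.

End FunctionalCalculus.

Section ProjectionCombinations.
Variables (R : realType) (n M : nat) (Pi : 'I_M -> 'M[R[i]]_n).
Hypothesis Pherm : forall i, Pi i \is hermsymmx.
Hypothesis Porth : forall i j, Pi i *m Pi j = (if i == j then Pi i else 0).
Hypothesis Psum : \sum_i Pi i = 1%:M.

Definition projcomb (a : 'I_M -> R) := \sum_i RtoC (a i) *: Pi i.

Lemma projcomb_herm a : projcomb a \is hermsymmx.
Proof.
apply/is_hermitianmxP; rewrite expr0 scale1r; apply/matrixP => k l.
rewrite !mxE !summxE rmorph_sum; apply: eq_bigr => i _.
rewrite !mxE rmorphM /= (hermitian_conj _ _ (Pherm i)); congr (_ * _).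
symmetry; exact: conjc_real.
Qed.

Lemma projcomb_mul_proj a i : projcomb a *m Pi i = RtoC (a i) *: Pi i.
Proof.
rewrite mulmx_suml (bigD1 i) //= -scalemxAl Porth eqxx big1 ?addr0 // => j ji.
by rewrite -scalemxAl Porth (negbTE ji) scaler0.
Qed.

Lemma projcomb_mul a b : projcomb a *m projcomb b = projcomb (fun i => a i * b i).
Proof.
rewrite {2}/projcomb mulmx_sumr; apply: eq_bigr => i _.
by rewrite -scalemxAr projcomb_mul_proj scalerA -rmorphM mulrC.
Qed.

Lemma mxfun_projcomb f a : mxfun f (projcomb a) = projcomb (fun i => f (a i)).
Proof.
exact: mxfun_eigenprojections (hermitian_normalmx (projcomb_herm a))
  (projcomb_mul_proj a) Psum.
Qed.

Lemma scale_projcomb r a : RtoC r *: projcomb a = projcomb (fun i => r * a i).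
Proof. by rewrite scaler_sumr; apply: eq_bigr => i _; rewrite scalerA -rmorphM. Qed.

Lemma sub_projcomb a b : projcomb a - projcomb b = projcomb (fun i => a i - b i).
Proof. by rewrite -sumrB; apply: eq_bigr => i _; rewrite /RtoC rmorphB scalerBl. Qed.

Lemma scale_proj_projcomb r i0 :
  RtoC r *: Pi i0 = projcomb (fun i => if i == i0 then r else 0).
Proof.
rewrite /projcomb (bigD1 i0) //= eqxx big1 ?addr0 // => i /negbTE ->.
by rewrite /RtoC rmorph0 scale0r.
Qed.

Lemma rtr_projcomb a : rtr (projcomb a) = \sum_i a i * rtr (Pi i).
Proof. by rewrite rtr_sum; apply: eq_bigr => i _; rewrite rtrZ. Qed.

Lemma rtr_projcomb_supp a i0 : (forall i, i != i0 -> a i = 0) ->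
  rtr (projcomb a) = a i0 * rtr (Pi i0).
Proof.
move=> a0; rewrite rtr_projcomb (bigD1 i0) //= big1 ?addr0 // => i /a0 ->.
exact: mul0r.
Qed.

Lemma sum_rtr_proj : \sum_i rtr (Pi i) = n%:R.
Proof. by rewrite -rtr_sum Psum rtr1. Qed.

Lemma sum_rtr_proj_neq i0 : \sum_(i | i != i0) rtr (Pi i) = n%:R - rtr (Pi i0).
Proof. by rewrite -sum_rtr_proj [in RHS](bigD1 i0) //= addrC addrK. Qed.

Lemma mexp_projcomb beta lam :
  mexp (RtoC (- beta) *: projcomb lam) =
  projcomb (fun i => expR (- beta * lam i)).
Proof. by rewrite scale_projcomb /mexp mxfun_projcomb. Qed.

End ProjectionCombinations.

Section FlatStateDivergences.
Variables (R : realType) (n M : nat) (Pi : 'I_M -> 'M[R[i]]_n).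
Hypothesis Pherm : forall i, Pi i \is hermsymmx.
Hypothesis Porth : forall i j, Pi i *m Pi j = (if i == j then Pi i else 0).
Hypothesis Psum : \sum_i Pi i = 1%:M.
Variables (i0 : 'I_M) (t : 'I_M -> R).
Hypothesis Pi0_neq0 : Pi i0 != 0.
Hypothesis t0_gt0 : 0 < t i0.

Local Notation d := (rtr (Pi i0)).
Local Notation rho := (RtoC d^-1 *: Pi i0).
Local Notation sigma := (projcomb Pi t).
Local Notation mxfunE := (mxfun_projcomb Pherm Porth Psum).
Local Notation mulE := (projcomb_mul Porth).
Local Notation rtr_suppE := (rtr_projcomb_supp Pi (i0 := i0)).

Let d_gt0 : 0 < d.
Proof. by apply: rtr_proj_gt0; rewrite ?Porth ?eqxx. Qed.

Let rhoE : rho = projcomb Pi (fun i => if i == i0 then d^-1 else 0).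
Proof. exact: scale_proj_projcomb. Qed.

Lemma qrelent_flat : qrelent rho sigma = - ln (d * t i0).
Proof.
rewrite /qrelent rhoE /mlog !mxfunE sub_projcomb mulE.
rewrite rtr_suppE => [|i /negbTE ->]; last by rewrite mul0r.
rewrite eqxx lnM ?posrE // lnV ?posrE //; field; exact: lt0r_neq0.
Qed.

Section Renyi.
Variable a : R.
Hypotheses (a_gt0 : 0 < a) (a_neq1 : a != 1).

Let renyi_of_flat_trace Y : Y = (d * t i0) `^ (1 - a) ->
  (a - 1)^-1 * ln Y = - ln (d * t i0).
Proof. by move=> ->; rewrite ln_powR; field; rewrite subr_eq0. Qed.

Lemma petz_renyi_flat : petz_renyi a rho sigma = - ln (d * t i0).
Proof.
apply: renyi_of_flat_trace; rewrite rhoE /mpow !mxfunE mulE.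
rewrite rtr_suppE => [|i /negbTE ->]; last by rewrite powR0 ?gt_eqF // mul0r.
rewrite eqxx; apply: ln_inj;
  rewrite ?(lnM, ln_powR, lnV) ?posrE ?(mulr_gt0, powR_gt0, invr_gt0) //.
by ring.
Qed.

Lemma sandwiched_renyi_flat : sandwiched_renyi a rho sigma = - ln (d * t i0).
Proof.
apply: renyi_of_flat_trace; rewrite rhoE /mpow !mxfunE !mulE !mxfunE.
rewrite rtr_suppE => [|i /negbTE ->]; last first.
  by rewrite mulr0 mul0r powR0 ?gt_eqF // mul0r.
rewrite eqxx; apply: ln_inj;
  rewrite ?(lnM, ln_powR, lnV) ?posrE ?(mulr_gt0, powR_gt0, invr_gt0) //.
by field; rewrite gt_eqF.
Qed.

Lemma geometric_renyi_flat : geometric_renyi a rho sigma = - ln (d * t i0).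
Proof.
apply: renyi_of_flat_trace; rewrite rhoE /mpow !mxfunE !mulE !mxfunE !mulE.
rewrite rtr_suppE => [|i /negbTE ->]; last first.
  by rewrite mulr0 mul0r powR0 ?gt_eqF ?mulr0 // mul0r.
rewrite eqxx; apply: ln_inj;
  rewrite ?(lnM, ln_powR, lnV) ?posrE ?(mulr_gt0, powR_gt0, invr_gt0) //.
by field.
Qed.

End Renyi.
End FlatStateDivergences.

Section BoltzmannWeights.
Variables (R : realType) (I : finType) (lam w : I -> R) (beta : R) (i0 : I).

Lemma sum_expR_shift :
  \sum_i expR (- beta * lam i) * w i =
  expR (- beta * lam i0) *
    (w i0 + \sum_(i | i != i0) expR (- beta * (lam i - lam i0)) * w i).
Proof.
rewrite (bigD1 i0) //= mulrDr mulr_sumr; congr (_ + _); apply: eq_bigr => i _.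
by rewrite mulrA -expRD mulrBr addrC subrK.
Qed.

Lemma sum_expR_shift_le (Delta : R) : 0 <= beta -> (forall i, 0 <= w i) ->
    (forall i, i != i0 -> Delta <= lam i - lam i0) ->
  \sum_(i | i != i0) expR (- beta * (lam i - lam i0)) * w i <=
  expR (- beta * Delta) * \sum_(i | i != i0) w i.
Proof.
move=> beta_ge0 w_ge0 gap; rewrite mulr_sumr; apply: ler_sum => i /gap gap_i.
by rewrite ler_wpM2r // ler_expR !mulNr lerN2 ler_wpM2l.
Qed.

End BoltzmannWeights.

Lemma incr_second_le (R : realType) M (lam : 'I_M -> R) (i1 i2 i : 'I_M) :
    (forall i j : 'I_M, (i < j)%N -> lam i < lam j) ->
    val i1 = 0%N -> val i2 = 1%N -> i != i1 ->
  lam i2 <= lam i.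
Proof.
move=> lam_lt i1_0 i2_1 i_neq1; case: (ltngtP 1 i) => [lt1i||i_1].
- by apply/ltW/lam_lt; rewrite i2_1.
- by rewrite ltnS leqn0 -i1_0 => /eqP/val_inj i_eq1; rewrite i_eq1 eqxx in i_neq1.
- by rewrite (_ : i = i2) //; apply: val_inj; rewrite i2_1.
Qed.

Lemma neg_ln_ratio (R : realType) (d X : R) : 0 < d -> 0 <= X ->
  - ln (d * (d + X)^-1) = ln (1 + X / d).
Proof.
move=> d_gt0 X_ge0; have dX_gt0 : 0 < d + X by rewrite ltr_wpDr.
rewrite -lnV ?posrE ?mulr_gt0 ?invr_gt0 //; congr ln; field.
by rewrite !gt_eqF.
Qed.

Unset Implicit Arguments.

Theorem proposition3 (R : realType) (n M : nat) (HM : (1 < M)%N)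
    (H : 'M[R[i]]_n) (lam : 'I_M -> R) (Pi : 'I_M -> 'M[R[i]]_n) :
  H \is hermsymmx ->
  (forall i j : 'I_M, (i < j)%N -> lam i < lam j) ->
  (forall i, Pi i \is hermsymmx) ->
  (forall i, Pi i != 0) ->
  (forall i j, Pi i *m Pi j = (if i == j then Pi i else 0)) ->
  \sum_(i < M) Pi i = 1%:M ->
  H = \sum_(i < M) RtoC (lam i) *: Pi i ->
  let i1 : 'I_M := Ordinal (ltn_trans (ltn0Sn 0) HM) in
  let i2 : 'I_M := Ordinal HM in
  let Delta := lam i2 - lam i1 in
  let dG := rtr (Pi i1) in
  let gamma := RtoC dG^-1 *: Pi i1 in
  forall beta : R, 0 <= beta ->
  let E := mexp (RtoC (- beta) *: H) in
  let tau := RtoC (rtr E)^-1 *: E in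
  [/\ qrelent gamma tau
        = ln (1 + (\sum_(i < M | i != i1)
                     expR (- beta * (lam i - lam i1)) * rtr (Pi i)) / dG),
      qrelent gamma tau
        <= ln (1 + expR (- beta * Delta) * ((n%:R - dG) / dG)) &
      forall alpha : R, 0 < alpha -> alpha != 1 ->
        [/\ qrelent gamma tau = petz_renyi alpha gamma tau,
            qrelent gamma tau = sandwiched_renyi alpha gamma tau &
            qrelent gamma tau = geometric_renyi alpha gamma tau]].
Proof.
move=> _ lam_lt Pherm Pnz Porth Psum H_eq i1 i2 Delta dG gamma beta beta_ge0 E tau.
set X := \sum_(i | i != i1) _.
have tr_ge0 i : 0 <= rtr (Pi i) by apply: rtr_proj_ge0; rewrite ?Porth ?eqxx.
have dG_gt0 : 0 < dG by apply: rtr_proj_gt0; rewrite ?Porth ?eqxx.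
have X_ge0 : 0 <= X by apply: sumr_ge0 => i _; rewrite mulr_ge0 ?expR_ge0.
have E_eq : E = projcomb Pi (fun i => expR (- beta * lam i)).
  by rewrite /E H_eq (mexp_projcomb Pherm Porth Psum).
have tau_eq : tau = projcomb Pi (fun i => (rtr E)^-1 * expR (- beta * lam i)).
  by rewrite /tau {2}E_eq scale_projcomb.
have p_eq : (rtr E)^-1 * expR (- beta * lam i1) = (dG + X)^-1.
  rewrite E_eq rtr_projcomb (sum_expR_shift _ _ _ i1) -/X -/dG; field.
  by rewrite !gt_eqF ?expR_gt0 ?ltr_wpDr.
have p_gt0 : 0 < (rtr E)^-1 * expR (- beta * lam i1).
  by rewrite p_eq invr_gt0 ltr_wpDr.
have D_eq : qrelent gamma tau = ln (1 + X / dG).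
  by rewrite tau_eq qrelent_flat // p_eq neg_ln_ratio.
split=> // [|alpha alpha_gt0 alpha_neq1].
- have gap i : i != i1 -> Delta <= lam i - lam i1.
    by move=> i_neq1; rewrite lerD2r (incr_second_le lam_lt _ _ i_neq1).
  have tail_le := sum_expR_shift_le (w := fun i => rtr (Pi i)) beta_ge0 tr_ge0 gap.
  have n_dG_ge0 : 0 <= n%:R - dG by rewrite -(sum_rtr_proj_neq Psum) sumr_ge0.
  rewrite D_eq ler_ln ?posrE
    ?ltr_wpDr ?divr_ge0 ?mulr_ge0 ?expR_ge0 ?invr_ge0 ?(ltW dG_gt0) //.
  by rewrite lerD2l mulrA ler_pM2r ?invr_gt0 // -(sum_rtr_proj_neq Psum).
by rewrite tau_eq qrelent_flat // petz_renyi_flat // sandwiched_renyi_flat //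
  geometric_renyi_flat.
Qed.
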